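(* Let $p\in(0,1)$, $\gamma>0$, $B>0$, $w\in\mathbb{N}$. Then: (a) for each $N\in\mathbb{N}$, $\mathcal{T}_N$ has a unique maximizer over the set $\{(\xi_1,\dots,\xi_N):\xi_j\ge0,\ \sum_{j=1}^N\xi_j\le B\}$; (b) $\mathcal{T}_N^*$ is a (non-strictly) increasing function of $N$; (c) $\lim_{N\to\infty}\mathcal{T}_N^*=\mathcal{T}_\infty^*$, and this limit is finite.
   Context: Logarithms are base 2. A nonnegative sequence $(x_j)_{j\ge1}$ is admissible if $\sum_j x_j\le B$. For an admissible sequence, $$\mathcal{T}_\infty(x_1,x_2,\dots)=\sum_{k=1}^{w}p^2(1-p)^{k-1}\frac{k}{2}\log_2\!\Big(1+\gamma\frac{B}{k}\Big)+\sum_{j=1}^{\infty}p(1-p)^{j+w-1}\frac12\log_2(1+\gamma x_j)+\sum_{k=1}^{\infty}p^2(1-p)^{k+w-1}\frac{w}{2}\log_2\!\Big(1+\gamma\frac{B-\sum_{j=1}^{k}x_j}{w}\Big),$$ and $\mathcal{T}_\infty^*$ is the supremum of $\mathcal{T}_\infty$ over all admissible sequences. For $N\in\mathbb{N}$ and $\xi_1,\dots,\xi_N\ge0$ with $\sum_{j=1}^N\xi_j\le B$, define $\mathcal{T}_N(\xi_1,\dots,\xi_N)=\mathcal{T}_\infty(\xi_1,\dots,\xi_N,0,0,\dots)$, and let $\mathcal{T}_N^*$ be the supremum of $\mathcal{T}_N$ over this set. *)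

From Stdlib Require Import Reals Lra.
From Coquelicot Require Import Coquelicot.
Open Scope R_scope.

Definition log2 (x : R) : R := ln x / ln 2.

Fixpoint psum (x : nat -> R) (n : nat) : R :=
  match n with O => 0 | S m => psum x m + x m end.

(* Sequences are 0-indexed: x j (j >= 0) stands for the paper's x_{j+1}. *)

Definition admissible (B : R) (x : nat -> R) : Prop :=
  (forall j, 0 <= x j) /\ (forall n, psum x n <= B).

(* T_infinity; w is the paper's w (assumed >= 1). *)
Definition Tinf (p gamma B : R) (w : nat) (x : nat -> R) : R :=
  psum (fun k => p^2 * (1-p)^k * (INR (S k) / 2)
                   * log2 (1 + gamma * B / INR (S k))) w
  + Series (fun j => p * (1-p)^(j + w) * (1/2) * log2 (1 + gamma * x j))
  + Series (fun k => p^2 * (1-p)^(k + w) * (INR w / 2)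
                   * log2 (1 + gamma * (B - psum x (S k)) / INR w)).

Definition Tinf_star (p gamma B : R) (w : nat) : Rbar :=
  Lub_Rbar (fun y => exists x, admissible B x /\ y = Tinf p gamma B w x).

(* An N-vector (xi_1..xi_N) is represented by xi : nat -> R, using only
   xi 0 .. xi (N-1); extN pads it with zeros. *)
Definition extN (N : nat) (xi : nat -> R) : nat -> R :=
  fun j => if Nat.ltb j N then xi j else 0.

Definition admissibleN (B : R) (N : nat) (xi : nat -> R) : Prop :=
  (forall j, (j < N)%nat -> 0 <= xi j) /\ psum xi N <= B.

Definition TN (p gamma B : R) (w N : nat) (xi : nat -> R) : R :=
  Tinf p gamma B w (extN N xi).

Definition TN_star (p gamma B : R) (w N : nat) : Rbar :=
  Lub_Rbar (fun y => exists xi, admissibleN B N xi /\ y = TN p gamma B w N xi).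

From Stdlib Require Import Reals Lra Lia Classical ClassicalEpsilon FunctionalExtensionality.
From Coquelicot Require Import Coquelicot.
Open Scope R_scope.

(** Every summand of [T_inf] is a concave function of the sequence, and the
    terms [log2 (1 + gamma x_j)] make it strongly concave in each coordinate,
    uniformly over admissible sequences: the value at the midpoint of [x] and
    [y] exceeds the mean of the values by at least [alpha_j kappa (x_j - y_j)^2].
    Hence, if [M] is the supremum of [T_N], any two [N]-vectors whose values are
    [eps]-close to [M] are [O(sqrt eps)]-close in every coordinate.  A maximizing
    sequence is therefore coordinatewise Cauchy; its limit is admissible and,
    [T_N] being Lipschitz, a maximizer; and two maximizers must coincide.
    Padding with a zero does not change the value, so [T_N^*] is nondecreasing.
    Finally, zeroing all coordinates from [N] on costs at most
    [(1-p)^N * sum_j alpha_j log2 (1 + gamma B)], which squeezes [T_N^*]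
    between [T_inf^* - O((1-p)^N)] and [T_inf^*]. *)

Lemma ln_le_sub_1 y : 0 < y -> ln y <= y - 1.
Proof. intros Hy. pose proof (exp_ineq1_le (ln y)) as H. rewrite exp_ln in H by exact Hy. lra. Qed.

Lemma ln_midpoint u v : 0 < u -> 0 < v ->
  (ln u + ln v) / 2 + (u - v) ^ 2 / (2 * (u + v) ^ 2) <= ln ((u + v) / 2).
Proof.
  intros Hu Hv. set (m := (u + v) / 2).
  assert (Hm : 0 < m) by (unfold m; lra).
  assert (Hln : ln (u * v / (m * m)) = ln u + ln v - 2 * ln m).
  { rewrite ln_div, !ln_mult by nra. ring. }
  assert (Hsq : u * v / (m * m) - 1 = - ((u - v) ^ 2 / (2 * (u + v) ^ 2)) * 2).
  { unfold m. field. lra. }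
  assert (Hpos : 0 < u * v / (m * m)) by (apply Rdiv_lt_0_compat; nra).
  pose proof (ln_le_sub_1 _ Hpos). lra.
Qed.

Lemma ln_sub_le_abs u v : 1 <= u -> 1 <= v -> ln u - ln v <= Rabs (u - v).
Proof.
  intros Hu Hv. rewrite <- ln_div by lra.
  eapply Rle_trans; [apply ln_le_sub_1, Rdiv_lt_0_compat; lra|].
  replace (u / v - 1) with ((u - v) / v) by (field; lra).
  apply Rle_div_l; [lra|].
  pose proof (Rle_abs (u - v)). pose proof (Rabs_pos (u - v)). nra.
Qed.

Lemma ln2_pos : 0 < ln 2.
Proof. rewrite <- ln_1. apply ln_increasing; lra. Qed.

Lemma log2_1 : log2 1 = 0.
Proof. unfold log2. rewrite ln_1. unfold Rdiv. ring. Qed.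

Lemma log2_le_compat a b : 0 < a -> a <= b -> log2 a <= log2 b.
Proof.
  intros. unfold log2, Rdiv. apply Rmult_le_compat_r.
  - left. apply Rinv_0_lt_compat, ln2_pos.
  - apply ln_le; lra.
Qed.

Lemma log2_nonneg a : 1 <= a -> 0 <= log2 a.
Proof. intros. rewrite <- log2_1. apply log2_le_compat; lra. Qed.

Lemma log2_midpoint_strong u v U : 0 < u -> 0 < v -> u + v <= 2 * U ->
  (log2 u + log2 v) / 2 + (u - v) ^ 2 / (8 * ln 2 * U ^ 2) <= log2 ((u + v) / 2).
Proof.
  intros Hu Hv HU. pose proof ln2_pos as Hl.
  assert (Hgap : (u - v) ^ 2 / (8 * ln 2 * U ^ 2) <= (u - v) ^ 2 / (2 * (u + v) ^ 2) / ln 2).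
  { replace ((u - v) ^ 2 / (2 * (u + v) ^ 2) / ln 2)
      with ((u - v) ^ 2 / (2 * (u + v) ^ 2 * ln 2)) by (field; lra).
    unfold Rdiv. apply Rmult_le_compat_l; [apply pow2_ge_0|].
    assert (Hsq : (u + v) ^ 2 <= (2 * U) ^ 2) by (apply pow_incr; lra).
    assert (Huv : 0 < (u + v) ^ 2) by (apply pow_lt; lra).
    apply Rinv_le_contravar.
    - apply Rmult_lt_0_compat; lra.
    - replace ((2 * U) ^ 2) with (4 * U ^ 2) in Hsq by ring. nra. }
  pose proof (ln_midpoint u v Hu Hv) as Hln.
  apply Rmult_le_compat_r with (r := / ln 2) in Hln; [|left; apply Rinv_0_lt_compat, Hl].
  unfold log2, Rdiv in *. lra.
Qed.

Lemma log2_midpoint u v : 0 < u -> 0 < v ->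
  (log2 u + log2 v) / 2 <= log2 ((u + v) / 2).
Proof.
  intros Hu Hv. pose proof (log2_midpoint_strong u v ((u + v) / 2) Hu Hv ltac:(lra)).
  assert (0 <= (u - v) ^ 2 / (8 * ln 2 * ((u + v) / 2) ^ 2)).
  { pose proof ln2_pos. apply Rdiv_le_0_compat; [apply pow2_ge_0|].
    apply Rmult_lt_0_compat; [lra|apply pow_lt; lra]. }
  lra.
Qed.

Lemma log2_sub_le_abs u v : 1 <= u -> 1 <= v -> log2 u - log2 v <= Rabs (u - v) / ln 2.
Proof.
  intros Hu Hv. pose proof ln2_pos. unfold log2.
  replace (ln u / ln 2 - ln v / ln 2) with ((ln u - ln v) / ln 2) by (field; lra).
  unfold Rdiv. apply Rmult_le_compat_r; [left; apply Rinv_0_lt_compat; lra|].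
  apply ln_sub_le_abs; lra.
Qed.

Lemma ex_series_le_nonneg (a b : nat -> R) :
  (forall n, 0 <= a n <= b n) -> ex_series b -> ex_series a.
Proof.
  intros H. apply (ex_series_le a b). intros n.
  change (norm (a n)) with (Rabs (a n)). rewrite Rabs_pos_eq; apply H.
Qed.

Lemma Series_nonneg (a : nat -> R) : (forall n, 0 <= a n) -> ex_series a -> 0 <= Series a.
Proof.
  intros H Ha. pose proof (Series_le (fun n => 0 * a n) a) as Hle.
  rewrite Series_scal_l in Hle.
  enough (0 * Series a <= Series a) by lra.
  apply Hle; [intros n; specialize (H n); lra | exact Ha].
Qed.

Lemma Series_le_compat (a b : nat -> R) :
  ex_series a -> ex_series b -> (forall n, a n <= b n) -> Series a <= Series b.
Proof.
  intros Ha Hb H.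
  enough (0 <= Series (fun n => b n - a n)) by (rewrite Series_minus in H0 by assumption; lra).
  apply Series_nonneg; [intros n; specialize (H n); lra|].
  apply (ex_series_minus b a); assumption.
Qed.

Lemma Series_ge_term (a : nat -> R) j :
  (forall n, 0 <= a n) -> ex_series a -> a j <= Series a.
Proof.
  intros H Ha. rewrite (Series_incr_n a (S j)) by (lia || assumption). simpl pred.
  assert (0 <= Series (fun k => a (S j + k)%nat)).
  { apply Series_nonneg; [auto|]. apply (ex_series_incr_n a (S j)), Ha. }
  assert (a j <= sum_f_R0 a j).
  { destruct j; simpl; [lra|]. pose proof (cond_pos_sum a j H). lra. }
  lra.
Qed.

Lemma Series_sub_mean (a b c : nat -> R) : ex_series a -> ex_series b -> ex_series c ->
  Series (fun n => c n - (a n + b n) / 2) = Series c - (Series a + Series b) / 2.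
Proof.
  intros Ha Hb Hc.
  assert (Hab : ex_series (fun n => (a n + b n) / 2)).
  { apply (ex_series_scal_r (/ 2) (fun n => a n + b n)), (ex_series_plus a b); assumption. }
  rewrite Series_minus by assumption. unfold Rdiv.
  rewrite (Series_scal_r (/ 2) (fun n => a n + b n)), Series_plus by assumption. reflexivity.
Qed.

Definition sup_image {T : Type} (A : T -> Prop) (f : T -> R) : Rbar :=
  Lub_Rbar (fun y => exists x, A x /\ y = f x).

Section SupImage.
Context {T : Type} (A : T -> Prop) (f : T -> R).

Lemma sup_image_ub x : A x -> Rbar_le (f x) (sup_image A f).
Proof. intros Hx. apply (proj1 (Lub_Rbar_correct _)). exists x; auto. Qed.

Lemma sup_image_lub U : (forall x, A x -> f x <= U) -> Rbar_le (sup_image A f) U.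
Proof. intros H. apply (proj2 (Lub_Rbar_correct _)). intros y [x [Hx ->]]. exact (H x Hx). Qed.

Lemma sup_image_le {T' : Type} (A' : T' -> Prop) (f' : T' -> R) :
  (forall x, A x -> exists x', A' x' /\ f x <= f' x') ->
  Rbar_le (sup_image A f) (sup_image A' f').
Proof.
  intros H. apply (proj2 (Lub_Rbar_correct _)). intros y [x [Hx ->]].
  destruct (H x Hx) as [x' [Hx' Hle]].
  apply Rbar_le_trans with (f' x'); [exact Hle|].
  apply (proj1 (Lub_Rbar_correct _)). exists x'; auto.
Qed.

Lemma sup_image_finite x0 U : A x0 -> (forall x, A x -> f x <= U) ->
  exists M, sup_image A f = Finite M.
Proof.
  intros Hx0 HU. pose proof (sup_image_ub x0 Hx0) as Hlo. pose proof (sup_image_lub U HU) as Hhi.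
  destruct (sup_image A f) as [M| |]; [exists M; reflexivity | contradiction | contradiction].
Qed.

Lemma sup_image_maximizing M : sup_image A f = Finite M ->
  exists X : nat -> T, (forall n, A (X n)) /\ is_lim_seq (fun n => f (X n)) M.
Proof.
  intros HM.
  assert (Happrox : forall n, exists x, A x /\ M - (1/2) ^ n < f x).
  { intros n. destruct (classic (exists x, A x /\ M - (1/2) ^ n < f x)) as [|Hno]; [assumption|].
    exfalso. assert (Hub : forall x, A x -> f x <= M - (1/2) ^ n).
    { intros x Hx. destruct (Rle_lt_dec (f x) (M - (1/2) ^ n)); [assumption|].
      exfalso. apply Hno. exists x; auto. }
    pose proof (sup_image_lub _ Hub) as H. rewrite HM in H. simpl in H.
    pose proof (pow_lt (1/2) n ltac:(lra)). lra. }
  destruct (choice _ Happrox) as [X HX]. exists X. split; [intros n; apply HX|].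
  apply is_lim_seq_le_le with (fun n => M - (1/2) ^ n) (fun _ => M).
  - intros n. split; [left; apply HX|].
    pose proof (sup_image_ub (X n) (proj1 (HX n))) as H. rewrite HM in H. exact H.
  - replace (Finite M) with (Finite (M - 0)) by (f_equal; ring).
    apply is_lim_seq_minus'; [apply is_lim_seq_const|].
    apply is_lim_seq_geom. rewrite Rabs_pos_eq; lra.
  - apply is_lim_seq_const.
Qed.

End SupImage.

Lemma ex_finite_lim_seq_of_sq_gap (u e : nat -> R) c : 0 < c -> is_lim_seq e 0 ->
  (forall n m, c * (u n - u m) ^ 2 <= e n + e m) -> ex_finite_lim_seq u.
Proof.
  intros Hc He Hgap. apply ex_lim_seq_cauchy_corr. intros [eps Heps]. simpl.
  apply is_lim_seq_spec in He.
  assert (Hd : 0 < c * eps ^ 2 / 2)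
    by (apply Rdiv_lt_0_compat; [apply Rmult_lt_0_compat, pow_lt|]; lra).
  destruct (He (mkposreal _ Hd)) as [N HN]. exists N. intros n m Hn Hm.
  pose proof (HN n Hn) as Hen. pose proof (HN m Hm) as Hem. simpl in Hen, Hem.
  rewrite Rminus_0_r in Hen, Hem. apply Rabs_def2 in Hen, Hem.
  specialize (Hgap n m). rewrite <- pow2_abs in Hgap.
  pose proof (Rabs_pos (u n - u m)).
  assert (Hsq : Rabs (u n - u m) ^ 2 < eps ^ 2).
  { apply (Rmult_lt_reg_l c); lra. }
  nra.
Qed.

Definition midpoint (x y : nat -> R) : nat -> R := fun j => (x j + y j) / 2.

Lemma psum_const0 n : psum (fun _ => 0) n = 0.
Proof. induction n as [|n IH]; simpl; [|rewrite IH]; ring. Qed.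

Lemma psum_midpoint x y n : psum (midpoint x y) n = (psum x n + psum y n) / 2.
Proof. induction n as [|n IH]; simpl; [|rewrite IH; unfold midpoint]; lra. Qed.

Lemma psum_le_psum x a b : (forall j, (j < b)%nat -> 0 <= x j) -> (a <= b)%nat ->
  psum x a <= psum x b.
Proof.
  intros Hx Hab. induction Hab as [|b Hab IH]; [lra|]. simpl.
  assert (0 <= x b) by (apply Hx; lia).
  assert (psum x a <= psum x b) by (apply IH; intros; apply Hx; lia). lra.
Qed.

Lemma psum_nonneg x n : (forall j, (j < n)%nat -> 0 <= x j) -> 0 <= psum x n.
Proof. intros Hx. apply (psum_le_psum x 0 n); [exact Hx | lia]. Qed.

Lemma psum_ge_term x n j : (forall k, (k < n)%nat -> 0 <= x k) -> (j < n)%nat ->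
  x j <= psum x n.
Proof.
  intros Hx Hj. apply Rle_trans with (psum x (S j)); [|apply psum_le_psum; auto].
  simpl. pose proof (psum_nonneg x j ltac:(intros; apply Hx; lia)). lra.
Qed.

Lemma psum_abs_sub x y n :
  Rabs (psum x n - psum y n) <= psum (fun j => Rabs (x j - y j)) n.
Proof.
  induction n as [|n IH]; simpl; [rewrite Rminus_0_r, Rabs_R0; lra|].
  replace (psum x n + x n - (psum y n + y n)) with ((psum x n - psum y n) + (x n - y n)) by ring.
  eapply Rle_trans; [apply Rabs_triang|]. lra.
Qed.

Lemma is_lim_seq_psum (X : nat -> nat -> R) (x : nat -> R) k :
  (forall j, (j < k)%nat -> is_lim_seq (fun n => X n j) (x j)) ->
  is_lim_seq (fun n => psum (X n) k) (psum x k).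
Proof.
  induction k as [|k IH]; intros Hlim; simpl; [apply is_lim_seq_const|].
  apply is_lim_seq_plus'; [apply IH; intros; apply Hlim; lia | apply Hlim; lia].
Qed.

Lemma extN_lt N xi j : (j < N)%nat -> extN N xi j = xi j.
Proof. intros H. unfold extN. apply Nat.ltb_lt in H. now rewrite H. Qed.

Lemma extN_ge N xi j : (N <= j)%nat -> extN N xi j = 0.
Proof. intros H. unfold extN. apply Nat.ltb_ge in H. now rewrite H. Qed.

Lemma psum_extN N xi n : psum (extN N xi) n = psum xi (Nat.min n N).
Proof.
  induction n as [|n IH]; [reflexivity|]. simpl psum at 1. rewrite IH.
  destruct (Nat.lt_ge_cases n N) as [Hn|Hn].
  - rewrite extN_lt by exact Hn. now replace (Nat.min (S n) N) with (S n) by lia;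
    replace (Nat.min n N) with n by lia.
  - rewrite extN_ge by exact Hn. replace (Nat.min (S n) N) with N by lia;
    replace (Nat.min n N) with N by lia. ring.
Qed.

Lemma extN_midpoint N x y : extN N (midpoint x y) = midpoint (extN N x) (extN N y).
Proof.
  apply functional_extensionality. intros j. unfold extN, midpoint.
  destruct (Nat.ltb j N); lra.
Qed.

Lemma extN_extN_S N xi : extN (S N) (extN N xi) = extN N xi.
Proof.
  apply functional_extensionality. intros j. unfold extN.
  destruct (Nat.ltb_spec j N), (Nat.ltb_spec j (S N)); reflexivity || lia.
Qed.

Section Admissible.
Variable B : R.

Lemma admissible_bounds x : admissible B x -> forall j, 0 <= x j <= B.
Proof.
  intros [Hx HB] j. split; [apply Hx|].
  pose proof (HB (S j)). simpl in H. pose proof (psum_nonneg x j (fun k _ => Hx k)). lra.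
Qed.

Lemma admissible_psum_bounds x : admissible B x -> forall n, 0 <= psum x n <= B.
Proof. intros [Hx HB] n. split; [apply psum_nonneg; auto | apply HB]. Qed.

Lemma admissible_midpoint x y : admissible B x -> admissible B y -> admissible B (midpoint x y).
Proof.
  intros [Hx HBx] [Hy HBy]. split.
  - intros j. unfold midpoint. specialize (Hx j). specialize (Hy j). lra.
  - intros n. rewrite psum_midpoint. specialize (HBx n). specialize (HBy n). lra.
Qed.

Lemma admissible_zero : 0 <= B -> admissible B (fun _ => 0).
Proof. intros HB. split; [intros; lra | intros n; rewrite psum_const0; exact HB]. Qed.

Lemma admissibleN_of_admissible N x : admissible B x -> admissibleN B N x.
Proof. intros [Hx HB]. split; auto. Qed.

Lemma admissible_extN N xi : admissibleN B N xi -> admissible B (extN N xi).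
Proof.
  intros [Hxi HB]. split.
  - intros j. destruct (Nat.lt_ge_cases j N).
    + rewrite extN_lt by assumption. auto.
    + rewrite extN_ge by assumption. lra.
  - intros n. rewrite psum_extN. eapply Rle_trans; [|exact HB].
    apply psum_le_psum; [exact Hxi | lia].
Qed.

Lemma admissibleN_midpoint N x y :
  admissibleN B N x -> admissibleN B N y -> admissibleN B N (midpoint x y).
Proof.
  intros [Hx HBx] [Hy HBy]. split.
  - intros j Hj. unfold midpoint. specialize (Hx j Hj). specialize (Hy j Hj). lra.
  - rewrite psum_midpoint. lra.
Qed.

Lemma admissibleN_closed N (X : nat -> nat -> R) (xs : nat -> R) :
  (forall n, admissibleN B N (X n)) ->
  (forall j, (j < N)%nat -> is_lim_seq (fun n => X n j) (xs j)) ->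
  admissibleN B N xs.
Proof.
  intros HX Hlim. split.
  - intros j Hj.
    pose proof (is_lim_seq_le (fun _ => 0) (fun n => X n j) 0 (xs j)) as H.
    apply H; [intros n; apply (proj1 (HX n)), Hj | apply is_lim_seq_const | apply Hlim, Hj].
  - pose proof (is_lim_seq_le (fun n => psum (X n) N) (fun _ => B) (psum xs N) B) as H.
    apply H; [intros n; apply (proj2 (HX n)) | apply is_lim_seq_psum, Hlim |].
    apply is_lim_seq_const.
Qed.

End Admissible.

Section Throughput.
Variables (p gamma B : R) (w : nat).
Hypotheses (hp : 0 < p < 1) (hgamma : 0 < gamma) (hB : 0 < B) (hw : (1 <= w)%nat).

Definition alpha (j : nat) : R := p * (1 - p) ^ (j + w) * (1 / 2).
Definition beta (k : nat) : R := p ^ 2 * (1 - p) ^ (k + w) * (INR w / 2).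
Definition termA (x : nat -> R) (j : nat) : R := alpha j * log2 (1 + gamma * x j).
Definition termB (x : nat -> R) (k : nat) : R :=
  beta k * log2 (1 + gamma * (B - psum x (S k)) / INR w).
Definition Tinf_head : R :=
  psum (fun k => p ^ 2 * (1 - p) ^ k * (INR (S k) / 2) * log2 (1 + gamma * B / INR (S k))) w.

Lemma Tinf_split x : Tinf p gamma B w x = Tinf_head + Series (termA x) + Series (termB x).
Proof. reflexivity. Qed.

Lemma INR_w_pos : 0 < INR w.
Proof. apply lt_0_INR. lia. Qed.

Lemma alpha_pos j : 0 < alpha j.
Proof. unfold alpha. pose proof (pow_lt (1 - p) (j + w) ltac:(lra)). nra. Qed.

Lemma beta_pos k : 0 < beta k.
Proof.
  unfold beta. pose proof (pow_lt (1 - p) (k + w) ltac:(lra)). pose proof INR_w_pos.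
  pose proof (pow_lt p 2 ltac:(lra)).
  apply Rmult_lt_0_compat; [apply Rmult_lt_0_compat|]; lra.
Qed.

Lemma alpha_shift N k : alpha (N + k) = (1 - p) ^ N * alpha k.
Proof.
  unfold alpha. replace (N + k + w)%nat with (N + (k + w))%nat by lia. rewrite pow_add. ring.
Qed.

Lemma ex_series_geom_scal c : ex_series (fun n => c * (1 - p) ^ n).
Proof.
  apply (ex_series_scal_l c (fun n => (1 - p) ^ n)).
  apply ex_series_geom. rewrite Rabs_pos_eq; lra.
Qed.

Lemma ex_series_alpha : ex_series alpha.
Proof.
  apply (ex_series_ext (fun n => p * (1 - p) ^ w * (1 / 2) * (1 - p) ^ n)).
  - intros n. change (p * (1 - p) ^ w * (1 / 2) * (1 - p) ^ n = alpha n).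
    unfold alpha. rewrite pow_add. ring.
  - apply ex_series_geom_scal.
Qed.

Lemma ex_series_beta : ex_series beta.
Proof.
  apply (ex_series_ext (fun n => p ^ 2 * (1 - p) ^ w * (INR w / 2) * (1 - p) ^ n)).
  - intros n. change (p ^ 2 * (1 - p) ^ w * (INR w / 2) * (1 - p) ^ n = beta n).
    unfold beta. rewrite pow_add. ring.
  - apply ex_series_geom_scal.
Qed.

Lemma termA_bounds x : admissible B x ->
  forall j, 0 <= termA x j <= alpha j * log2 (1 + gamma * B).
Proof.
  intros Hx j. pose proof (admissible_bounds B x Hx j). pose proof (alpha_pos j).
  unfold termA. split.
  - apply Rmult_le_pos; [lra|]. apply log2_nonneg. nra.
  - apply Rmult_le_compat_l; [lra|]. apply log2_le_compat; nra.
Qed.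

Lemma termB_arg_bounds x k : admissible B x ->
  1 <= 1 + gamma * (B - psum x (S k)) / INR w <= 1 + gamma * B / INR w.
Proof.
  intros Hx. pose proof (admissible_psum_bounds B x Hx (S k)). pose proof INR_w_pos.
  split.
  - assert (0 <= gamma * (B - psum x (S k)) / INR w) by (apply Rdiv_le_0_compat; nra). lra.
  - unfold Rdiv. apply Rplus_le_compat_l, Rmult_le_compat_r; [left; apply Rinv_0_lt_compat|]; nra.
Qed.

Lemma termB_bounds x : admissible B x ->
  forall k, 0 <= termB x k <= beta k * log2 (1 + gamma * B / INR w).
Proof.
  intros Hx k. pose proof (termB_arg_bounds x k Hx). pose proof (beta_pos k).
  unfold termB. split.
  - apply Rmult_le_pos; [lra|]. apply log2_nonneg. lra.
  - apply Rmult_le_compat_l; [lra|]. apply log2_le_compat; lra.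
Qed.

Lemma ex_series_termA x : admissible B x -> ex_series (termA x).
Proof.
  intros Hx. apply (ex_series_le_nonneg _ (fun j => alpha j * log2 (1 + gamma * B))).
  - apply termA_bounds, Hx.
  - apply (ex_series_scal_r _ alpha), ex_series_alpha.
Qed.

Lemma ex_series_termB x : admissible B x -> ex_series (termB x).
Proof.
  intros Hx. apply (ex_series_le_nonneg _ (fun k => beta k * log2 (1 + gamma * B / INR w))).
  - apply termB_bounds, Hx.
  - apply (ex_series_scal_r _ beta), ex_series_beta.
Qed.

Lemma Tinf_le_bound x : admissible B x ->
  Tinf p gamma B w x <= Tinf_head + Series alpha * log2 (1 + gamma * B)
                        + Series beta * log2 (1 + gamma * B / INR w).
Proof.
  intros Hx. rewrite Tinf_split, <- !Series_scal_r.
  assert (Series (termA x) <= Series (fun j => alpha j * log2 (1 + gamma * B))).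
  { apply Series_le; [apply termA_bounds, Hx | apply (ex_series_scal_r _ alpha), ex_series_alpha]. }
  assert (Series (termB x) <= Series (fun k => beta k * log2 (1 + gamma * B / INR w))).
  { apply Series_le; [apply termB_bounds, Hx | apply (ex_series_scal_r _ beta), ex_series_beta]. }
  lra.
Qed.

Definition kappa : R := gamma ^ 2 / (8 * ln 2 * (1 + gamma * B) ^ 2).

Lemma kappa_pos : 0 < kappa.
Proof.
  unfold kappa. pose proof ln2_pos. apply Rdiv_lt_0_compat; [apply pow_lt; lra|].
  apply Rmult_lt_0_compat; [lra | apply pow_lt; nra].
Qed.

Lemma termA_midpoint x y n : admissible B x -> admissible B y ->
  (termA x n + termA y n) / 2 + alpha n * kappa * (x n - y n) ^ 2 <= termA (midpoint x y) n.
Proof.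
  intros Hx Hy.
  pose proof (admissible_bounds B x Hx n) as Bx. pose proof (admissible_bounds B y Hy n) as By.
  pose proof (log2_midpoint_strong (1 + gamma * x n) (1 + gamma * y n) (1 + gamma * B)
                ltac:(nra) ltac:(nra) ltac:(nra)) as H.
  replace ((1 + gamma * x n + (1 + gamma * y n)) / 2) with (1 + gamma * midpoint x y n) in H
    by (unfold midpoint; field).
  replace ((1 + gamma * x n - (1 + gamma * y n)) ^ 2 / (8 * ln 2 * (1 + gamma * B) ^ 2))
    with (kappa * (x n - y n) ^ 2) in H
    by (unfold kappa; field; split; [nra | apply Rgt_not_eq, ln2_pos]).
  unfold termA. pose proof (alpha_pos n).
  apply Rmult_le_compat_l with (r := alpha n) in H; lra.
Qed.

Lemma termB_midpoint x y k : admissible B x -> admissible B y ->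
  (termB x k + termB y k) / 2 <= termB (midpoint x y) k.
Proof.
  intros Hx Hy.
  pose proof (termB_arg_bounds x k Hx) as Bx. pose proof (termB_arg_bounds y k Hy) as By.
  pose proof INR_w_pos as Hw. pose proof (beta_pos k) as Hb.
  pose proof (log2_midpoint (1 + gamma * (B - psum x (S k)) / INR w)
                (1 + gamma * (B - psum y (S k)) / INR w) ltac:(lra) ltac:(lra)) as H.
  replace ((1 + gamma * (B - psum x (S k)) / INR w + (1 + gamma * (B - psum y (S k)) / INR w)) / 2)
    with (1 + gamma * (B - psum (midpoint x y) (S k)) / INR w) in H
    by (rewrite psum_midpoint; field; lra).
  unfold termB. apply Rmult_le_compat_l with (r := beta k) in H; lra.
Qed.

Lemma Tinf_strong_midpoint x y j : admissible B x -> admissible B y ->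
  (Tinf p gamma B w x + Tinf p gamma B w y) / 2 + alpha j * kappa * (x j - y j) ^ 2
  <= Tinf p gamma B w (midpoint x y).
Proof.
  intros Hx Hy. pose proof (admissible_midpoint B x y Hx Hy) as Hm.
  pose proof kappa_pos as Hk.
  assert (HA : alpha j * kappa * (x j - y j) ^ 2
               <= Series (fun n => termA (midpoint x y) n - (termA x n + termA y n) / 2)).
  { eapply Rle_trans; [|apply (Series_ge_term _ j)].
    - cbv beta. pose proof (termA_midpoint x y j Hx Hy). lra.
    - intros n. pose proof (termA_midpoint x y n Hx Hy). pose proof (alpha_pos n).
      assert (0 <= alpha n * kappa * (x n - y n) ^ 2)
        by (apply Rmult_le_pos; [apply Rmult_le_pos | apply pow2_ge_0]; lra). lra.
    - apply (ex_series_minus (termA (midpoint x y)) (fun n => (termA x n + termA y n) / 2));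
        [apply ex_series_termA, Hm|].
      apply (ex_series_scal_r (/ 2) (fun n => termA x n + termA y n)),
        (ex_series_plus (termA x) (termA y)); apply ex_series_termA; assumption. }
  assert (HB : 0 <= Series (fun n => termB (midpoint x y) n - (termB x n + termB y n) / 2)).
  { apply Series_nonneg.
    - intros n. pose proof (termB_midpoint x y n Hx Hy). lra.
    - apply (ex_series_minus (termB (midpoint x y)) (fun n => (termB x n + termB y n) / 2));
        [apply ex_series_termB, Hm|].
      apply (ex_series_scal_r (/ 2) (fun n => termB x n + termB y n)),
        (ex_series_plus (termB x) (termB y)); apply ex_series_termB; assumption. }
  rewrite Series_sub_mean in HA by (apply ex_series_termA; assumption).
  rewrite Series_sub_mean in HB by (apply ex_series_termB; assumption).
  rewrite !Tinf_split. lra.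
Qed.

Lemma termA_sub_le x y n : admissible B x -> admissible B y ->
  termA x n - termA y n <= alpha n * (gamma / ln 2 * Rabs (x n - y n)).
Proof.
  intros Hx Hy.
  pose proof (admissible_bounds B x Hx n) as Bx. pose proof (admissible_bounds B y Hy n) as By.
  pose proof (log2_sub_le_abs (1 + gamma * x n) (1 + gamma * y n) ltac:(nra) ltac:(nra)) as H.
  replace (1 + gamma * x n - (1 + gamma * y n)) with (gamma * (x n - y n)) in H by ring.
  rewrite Rabs_mult, (Rabs_pos_eq gamma) in H by lra.
  replace (gamma * Rabs (x n - y n) / ln 2) with (gamma / ln 2 * Rabs (x n - y n)) in H
    by (field; apply Rgt_not_eq, ln2_pos).
  unfold termA. pose proof (alpha_pos n).
  apply Rmult_le_compat_l with (r := alpha n) in H; lra.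
Qed.

Lemma termB_sub_le x y k : admissible B x -> admissible B y ->
  termB x k - termB y k
  <= beta k * (gamma / ln 2 / INR w * Rabs (psum x (S k) - psum y (S k))).
Proof.
  intros Hx Hy.
  pose proof (termB_arg_bounds x k Hx) as Bx. pose proof (termB_arg_bounds y k Hy) as By.
  pose proof INR_w_pos as Hw. pose proof ln2_pos as Hl.
  pose proof (log2_sub_le_abs _ _ (proj1 Bx) (proj1 By)) as H.
  replace (1 + gamma * (B - psum x (S k)) / INR w - (1 + gamma * (B - psum y (S k)) / INR w))
    with (gamma / INR w * - (psum x (S k) - psum y (S k))) in H by (field; lra).
  rewrite Rabs_mult, Rabs_Ropp, (Rabs_pos_eq (gamma / INR w)) in H
    by (apply Rdiv_le_0_compat; lra).
  replace (gamma / INR w * Rabs (psum x (S k) - psum y (S k)) / ln 2)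
    with (gamma / ln 2 / INR w * Rabs (psum x (S k) - psum y (S k))) in H by (field; lra).
  unfold termB. pose proof (beta_pos k).
  apply Rmult_le_compat_l with (r := beta k) in H; lra.
Qed.

Definition lip_const : R := gamma / ln 2 * (Series alpha + Series beta / INR w).

Lemma Tinf_sub_le x y D : admissible B x -> admissible B y ->
  (forall j, Rabs (x j - y j) <= D) -> (forall n, Rabs (psum x n - psum y n) <= D) ->
  Tinf p gamma B w x - Tinf p gamma B w y <= lip_const * D.
Proof.
  intros Hx Hy HD HP. pose proof ln2_pos. pose proof INR_w_pos.
  assert (HA : Series (termA x) - Series (termA y) <= Series alpha * (gamma / ln 2 * D)).
  { rewrite <- Series_minus, <- Series_scal_r by (apply ex_series_termA; assumption).
    apply Series_le_compat.
    - apply (ex_series_minus (termA x) (termA y)); apply ex_series_termA; assumption.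
    - apply (ex_series_scal_r _ alpha), ex_series_alpha.
    - intros n. eapply Rle_trans; [apply termA_sub_le; assumption|].
      apply Rmult_le_compat_l; [left; apply alpha_pos|].
      apply Rmult_le_compat_l; [apply Rdiv_le_0_compat; lra | apply HD]. }
  assert (HB : Series (termB x) - Series (termB y) <= Series beta * (gamma / ln 2 / INR w * D)).
  { rewrite <- Series_minus, <- Series_scal_r by (apply ex_series_termB; assumption).
    apply Series_le_compat.
    - apply (ex_series_minus (termB x) (termB y)); apply ex_series_termB; assumption.
    - apply (ex_series_scal_r _ beta), ex_series_beta.
    - intros k. eapply Rle_trans; [apply termB_sub_le; assumption|].
      apply Rmult_le_compat_l; [left; apply beta_pos|].
      apply Rmult_le_compat_l; [|apply HP].
      apply Rdiv_le_0_compat; [apply Rdiv_le_0_compat|]; lra. }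
  rewrite !Tinf_split.
  replace (lip_const * D)
    with (Series alpha * (gamma / ln 2 * D) + Series beta * (gamma / ln 2 / INR w * D))
    by (unfold lip_const; field; lra).
  lra.
Qed.

Lemma Tinf_lipschitz x y D : admissible B x -> admissible B y ->
  (forall j, Rabs (x j - y j) <= D) -> (forall n, Rabs (psum x n - psum y n) <= D) ->
  Rabs (Tinf p gamma B w x - Tinf p gamma B w y) <= lip_const * D.
Proof.
  intros Hx Hy HD HP. apply Rabs_le.
  pose proof (Tinf_sub_le x y D Hx Hy HD HP) as Hxy.
  assert (Hyx : Tinf p gamma B w y - Tinf p gamma B w x <= lip_const * D).
  { apply Tinf_sub_le; auto; intros; rewrite Rabs_minus_sym; auto. }
  lra.
Qed.

Lemma Tinf_truncation x N : admissible B x ->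
  Tinf p gamma B w x
  <= Tinf p gamma B w (extN N x) + (1 - p) ^ N * (Series alpha * log2 (1 + gamma * B)).
Proof.
  intros Hx. pose proof (admissible_extN B N x (admissibleN_of_admissible B N x Hx)) as He.
  set (d := fun j => termA x j - termA (extN N x) j).
  assert (Hd : forall k, d (N + k)%nat = termA x (N + k)).
  { intros k. unfold d, termA. rewrite extN_ge, Rmult_0_r, Rplus_0_r, log2_1 by lia. ring. }
  assert (HA : Series (termA x) - Series (termA (extN N x))
               <= (1 - p) ^ N * (Series alpha * log2 (1 + gamma * B))).
  { rewrite <- Series_minus by (apply ex_series_termA; assumption). fold d.
    rewrite (Series_incr_n_aux d N).
    2: { intros k Hk. unfold d, termA. rewrite extN_lt by exact Hk. ring. }
    rewrite (Series_ext _ _ Hd), <- Series_scal_r, <- Series_scal_l.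
    apply Series_le_compat.
    - apply (ex_series_incr_n (termA x) N), ex_series_termA, Hx.
    - apply (ex_series_scal_l _ (fun k => alpha k * _)), (ex_series_scal_r _ alpha).
      exact ex_series_alpha.
    - intros k. rewrite <- Rmult_assoc, <- alpha_shift. apply termA_bounds, Hx. }
  assert (HB : Series (termB x) <= Series (termB (extN N x))).
  { apply Series_le_compat; [apply ex_series_termB; assumption .. |].
    intros k. unfold termB. apply Rmult_le_compat_l; [left; apply beta_pos|].
    pose proof (termB_arg_bounds x k Hx). apply log2_le_compat; [lra|].
    pose proof INR_w_pos. rewrite psum_extN.
    assert (psum x (Nat.min (S k) N) <= psum x (S k))
      by (apply psum_le_psum; [intros; apply (proj1 Hx) | lia]).
    unfold Rdiv. apply Rplus_le_compat_l, Rmult_le_compat_r; [left; apply Rinv_0_lt_compat|]; nra. }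
  rewrite !Tinf_split. lra.
Qed.

Lemma TN_star_sup_image N :
  TN_star p gamma B w N = sup_image (admissibleN B N) (TN p gamma B w N).
Proof. reflexivity. Qed.

Lemma Tinf_star_sup_image : Tinf_star p gamma B w = sup_image (admissible B) (Tinf p gamma B w).
Proof. reflexivity. Qed.

Lemma TN_strong_midpoint N xi eta j : admissibleN B N xi -> admissibleN B N eta -> (j < N)%nat ->
  (TN p gamma B w N xi + TN p gamma B w N eta) / 2 + alpha j * kappa * (xi j - eta j) ^ 2
  <= TN p gamma B w N (midpoint xi eta).
Proof.
  intros Hxi Heta Hj. unfold TN. rewrite extN_midpoint.
  pose proof (Tinf_strong_midpoint (extN N xi) (extN N eta) j
                (admissible_extN B N xi Hxi) (admissible_extN B N eta Heta)) as H.
  rewrite !extN_lt in H by exact Hj. exact H.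
Qed.

Lemma TN_lipschitz N xi eta : admissibleN B N xi -> admissibleN B N eta ->
  Rabs (TN p gamma B w N xi - TN p gamma B w N eta)
  <= lip_const * psum (fun j => Rabs (xi j - eta j)) N.
Proof.
  intros Hxi Heta. unfold TN.
  apply Tinf_lipschitz; [apply admissible_extN; assumption .. | |].
  - intros j. destruct (Nat.lt_ge_cases j N).
    + rewrite !extN_lt by assumption.
      apply (psum_ge_term (fun j => Rabs (xi j - eta j))); [intros; apply Rabs_pos | assumption].
    + rewrite !extN_ge by assumption. rewrite Rminus_0_r, Rabs_R0.
      apply psum_nonneg. intros; apply Rabs_pos.
  - intros n. rewrite !psum_extN. eapply Rle_trans; [apply psum_abs_sub|].
    apply psum_le_psum; [intros; apply Rabs_pos | lia].
Qed.

Lemma TN_le_bound N xi : admissibleN B N xi ->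
  TN p gamma B w N xi <= Tinf_head + Series alpha * log2 (1 + gamma * B)
                         + Series beta * log2 (1 + gamma * B / INR w).
Proof. intros Hxi. apply Tinf_le_bound, admissible_extN, Hxi. Qed.

Lemma TN_star_finite N : exists M, TN_star p gamma B w N = Finite M.
Proof.
  rewrite TN_star_sup_image.
  apply (sup_image_finite _ _ (fun _ => 0) _
           (admissibleN_of_admissible B N _ (admissible_zero B ltac:(lra))) (TN_le_bound N)).
Qed.

Lemma Tinf_star_finite : exists L, Tinf_star p gamma B w = Finite L.
Proof.
  rewrite Tinf_star_sup_image.
  apply (sup_image_finite _ _ (fun _ => 0) _ (admissible_zero B ltac:(lra)) Tinf_le_bound).
Qed.

Lemma TN_gap N M xi eta j :
  (forall z, admissibleN B N z -> TN p gamma B w N z <= M) ->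
  admissibleN B N xi -> admissibleN B N eta -> (j < N)%nat ->
  2 * (alpha j * kappa) * (xi j - eta j) ^ 2
  <= (M - TN p gamma B w N xi) + (M - TN p gamma B w N eta).
Proof.
  intros HM Hxi Heta Hj.
  pose proof (TN_strong_midpoint N xi eta j Hxi Heta Hj).
  pose proof (HM _ (admissibleN_midpoint B N xi eta Hxi Heta)). lra.
Qed.

Lemma is_lim_seq_TN N (X : nat -> nat -> R) (xs : nat -> R) :
  (forall n, admissibleN B N (X n)) -> admissibleN B N xs ->
  (forall j, (j < N)%nat -> is_lim_seq (fun n => X n j) (xs j)) ->
  is_lim_seq (fun n => TN p gamma B w N (X n)) (TN p gamma B w N xs).
Proof.
  intros HX Hxs Hlim.
  set (d := fun n => psum (fun j => Rabs (X n j - xs j)) N).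
  assert (Hd : is_lim_seq d 0).
  { rewrite <- (psum_const0 N). apply is_lim_seq_psum. intros j Hj.
    apply (is_lim_seq_abs_0 (fun n => X n j - xs j)).
    replace (Finite 0) with (Finite (xs j - xs j)) by (f_equal; ring).
    apply is_lim_seq_minus'; [apply Hlim, Hj | apply is_lim_seq_const]. }
  assert (Hld : is_lim_seq (fun n => lip_const * d n) 0).
  { replace (Finite 0) with (Rbar_mult lip_const 0) by (simpl; f_equal; ring).
    apply is_lim_seq_scal_l, Hd. }
  pose proof (fun n => TN_lipschitz N (X n) xs (HX n) Hxs) as Hlip.
  set (t := TN p gamma B w N xs) in *.
  apply (is_lim_seq_le_le (fun n => t - lip_const * d n) _ (fun n => t + lip_const * d n)).
  - intros n. apply Rabs_le_between', Hlip.
  - replace (Finite t) with (Finite (t - 0)) by (f_equal; ring).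
    apply is_lim_seq_minus'; [apply is_lim_seq_const | exact Hld].
  - replace (Finite t) with (Finite (t + 0)) by (f_equal; ring).
    apply is_lim_seq_plus'; [apply is_lim_seq_const | exact Hld].
Qed.

Definition TN_maximizer N (xs : nat -> R) : Prop :=
  admissibleN B N xs /\ forall z, admissibleN B N z -> TN p gamma B w N z <= TN p gamma B w N xs.

Lemma TN_maximizer_exists N : exists xs, TN_maximizer N xs.
Proof.
  destruct (TN_star_finite N) as [M HM]. rewrite TN_star_sup_image in HM.
  assert (Hub : forall z, admissibleN B N z -> TN p gamma B w N z <= M).
  { intros z Hz. pose proof (sup_image_ub _ (TN p gamma B w N) z Hz) as H.
    rewrite HM in H. exact H. }
  destruct (sup_image_maximizing _ _ M HM) as [X [HX HXlim]].
  assert (Hgap : is_lim_seq (fun n => M - TN p gamma B w N (X n)) 0).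
  { replace (Finite 0) with (Finite (M - M)) by (f_equal; ring).
    apply is_lim_seq_minus'; [apply is_lim_seq_const | exact HXlim]. }
  (* Coordinates [j >= N] of [xs] are junk, but [admissibleN] and [TN] never read them. *)
  set (xs := fun j => real (Lim_seq (fun n => X n j))).
  assert (Hlim : forall j, (j < N)%nat -> is_lim_seq (fun n => X n j) (xs j)).
  { intros j Hj.
    destruct (ex_finite_lim_seq_of_sq_gap (fun n => X n j) _ (2 * (alpha j * kappa))
                ltac:(pose proof (alpha_pos j); pose proof kappa_pos; nra) Hgap
                (fun n m => TN_gap N M (X n) (X m) j Hub (HX n) (HX m) Hj)) as [l Hl].
    unfold xs. rewrite (is_lim_seq_unique _ _ Hl). exact Hl. }
  pose proof (admissibleN_closed B N X xs HX Hlim) as Hxs.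
  exists xs. split; [exact Hxs|].
  assert (HMxs : Finite M = Finite (TN p gamma B w N xs)).
  { rewrite <- (is_lim_seq_unique _ _ HXlim).
    apply is_lim_seq_unique, is_lim_seq_TN; assumption. }
  injection HMxs as HMxs. rewrite <- HMxs. exact Hub.
Qed.

Lemma TN_maximizer_unique N xs eta : TN_maximizer N xs -> TN_maximizer N eta ->
  forall j, (j < N)%nat -> eta j = xs j.
Proof.
  intros [Hxs Hmax] [Heta Hmax'] j Hj.
  pose proof (TN_gap N _ eta xs j Hmax Heta Hxs Hj) as Hgap.
  pose proof (Hmax' _ Hxs). pose proof (alpha_pos j). pose proof kappa_pos.
  assert (Hsq : (eta j - xs j) ^ 2 <= 0).
  { apply (Rmult_le_reg_l (2 * (alpha j * kappa))); nra. }
  nra.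
Qed.

Lemma TN_star_le_S N : Rbar_le (TN_star p gamma B w N) (TN_star p gamma B w (S N)).
Proof.
  rewrite !TN_star_sup_image. apply sup_image_le. intros xi Hxi.
  exists (extN N xi). split.
  - apply admissibleN_of_admissible, admissible_extN, Hxi.
  - unfold TN. rewrite extN_extN_S. lra.
Qed.

Lemma TN_star_le_Tinf_star N : Rbar_le (TN_star p gamma B w N) (Tinf_star p gamma B w).
Proof.
  rewrite TN_star_sup_image, Tinf_star_sup_image. apply sup_image_le. intros xi Hxi.
  exists (extN N xi). split; [apply admissible_extN, Hxi | unfold TN; lra].
Qed.

Lemma Tinf_star_le_TN_star N M : TN_star p gamma B w N = Finite M ->
  Rbar_le (Tinf_star p gamma B w) (M + (1 - p) ^ N * (Series alpha * log2 (1 + gamma * B))).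
Proof.
  intros HM. rewrite Tinf_star_sup_image. apply sup_image_lub. intros x Hx.
  pose proof (sup_image_ub _ (TN p gamma B w N) x (admissibleN_of_admissible B N x Hx)) as H.
  rewrite <- TN_star_sup_image, HM in H. simpl in H. unfold TN in H.
  pose proof (Tinf_truncation x N Hx). lra.
Qed.

Lemma TN_star_tendsto : exists (s : nat -> R) (L : R),
  (forall N, TN_star p gamma B w N = Finite (s N)) /\
  Tinf_star p gamma B w = Finite L /\ is_lim_seq s L.
Proof.
  destruct (choice _ TN_star_finite) as [s Hs]. destruct Tinf_star_finite as [L HL].
  exists s, L. split; [exact Hs|]. split; [exact HL|].
  set (C := Series alpha * log2 (1 + gamma * B)).
  apply (is_lim_seq_le_le (fun N => L - (1 - p) ^ N * C) s (fun _ => L)).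
  - intros N. pose proof (TN_star_le_Tinf_star N) as Hup.
    pose proof (Tinf_star_le_TN_star N (s N) (Hs N)) as Hlo.
    rewrite Hs, HL in Hup. rewrite HL in Hlo. simpl in Hup, Hlo. fold C in Hlo. lra.
  - replace (Finite L) with (Finite (L - 0 * C)) by (f_equal; ring).
    apply is_lim_seq_minus'; [apply is_lim_seq_const|].
    apply (is_lim_seq_scal_r (fun N => (1 - p) ^ N) C 0), is_lim_seq_geom. rewrite Rabs_pos_eq; lra.
  - apply is_lim_seq_const.
Qed.

End Throughput.

Theorem lemma2 (p gamma B : R) (w : nat)
  (hp : 0 < p < 1) (hgamma : 0 < gamma) (hB : 0 < B) (hw : (1 <= w)%nat) :
  (* (a) unique maximizer of T_N over the admissible N-vectors *)
  (forall N : nat, (1 <= N)%nat ->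
     exists xi : nat -> R,
       admissibleN B N xi /\
       (forall eta, admissibleN B N eta -> TN p gamma B w N eta <= TN p gamma B w N xi) /\
       (forall eta, admissibleN B N eta ->
          (forall eta', admissibleN B N eta' ->
             TN p gamma B w N eta' <= TN p gamma B w N eta) ->
          forall j, (j < N)%nat -> eta j = xi j))
  /\
  (* (b) T_N^* is nondecreasing in N *)
  (forall N : nat, (1 <= N)%nat ->
     Rbar_le (TN_star p gamma B w N) (TN_star p gamma B w (S N)))
  /\
  (* (c) T_N^* -> T_inf^*, and the limit is finite *)
  (exists (s : nat -> R) (L : R),
     (forall N, (1 <= N)%nat -> TN_star p gamma B w N = Finite (s N)) /\
     Tinf_star p gamma B w = Finite L /\
     is_lim_seq s L).
Proof.
  split; [|split].
  - intros N _.
    destruct (TN_maximizer_exists p gamma B w hp hgamma hB hw N) as [xs [Hxs Hmax]].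
    exists xs. split; [exact Hxs|]. split; [exact Hmax|].
    intros eta Heta Hmax'.
    apply (TN_maximizer_unique p gamma B w hp hgamma hB hw N); split; assumption.
  - intros N _. apply TN_star_le_S.
  - destruct (TN_star_tendsto p gamma B w hp hgamma hB hw) as [s [L [Hs [HL Hlim]]]].
    exists s, L. split; [intros N _; apply Hs | split; assumption].
Qed.
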